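(* Let $\eta\ge2$ and $P\in\mathfrak N_\eta$ with $h_P>\eta$. Then $P$ does not have a 4-crown as a retract.
   Context: All posets are finite; $h_P$ is the height; level sets $P(0)=\min P$, $P(k+1)=\min(P\setminus\bigcup_{i\le k}P(i))$; $A<B$ means $a<b$ for all $a\in A,b\in B$. A 4-crown is the ordinal sum of two 2-element antichains. A retract is the image of an idempotent order-preserving self-map. A section of width three is a poset $P$ of height $h_P\ge1$ with carrier $\{c_{k,j}:k\in[0,h_P],j\in\{0,1,2\}\}$ such that: $c_{0,j}<\dots<c_{h_P,j}$ for each $j$; each $\{c_{k,0},c_{k,1},c_{k,2}\}$ is an antichain; $c_{k,i}<c_{\ell,j}\Rightarrow c_{k,i+1}<c_{\ell,j+1}$ (indices mod 3); and for no $k$ is $P(k)<P(k+1)$. It is nice if for all $x<y$: $\{z:z>x\}\not\subseteq\{z:z\ge y\}$ and $\{z:z<y\}\not\subseteq\{z:z\le x\}$. The horizon of a nice section of height $\ge2$ is the smallest $\eta\in\mathbb N$ with $P(k)<P(k+\eta)$ for all $k\in[0,h_P-\eta]$; $\mathfrak N_\eta$ is the class of nice sections of height $\ge2$ with horizon $\eta$. *)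

From mathcomp Require Import all_boot all_order.
Set Implicit Arguments. Unset Strict Implicit. Unset Printing Implicit Defensive.
Import Order.Theory.
Local Open Scope order_scope.

Section Sections.
Context {disp : Order.disp_t} {T : finPOrderType disp}.

Definition minset (A : {set T}) : {set T} :=
  [set x in A | [forall y in A, ~~ (y < x)]].

(* below k = P(0) U ... U P(k-1) *)
Fixpoint below (k : nat) : {set T} :=
  match k with
  | 0 => set0
  | k'.+1 => below k' :|: minset (~: below k')
  end.

Definition level (k : nat) : {set T} := minset (~: below k).

Definition set_lt (A B : {set T}) : Prop :=
  forall a b, a \in A -> b \in B -> a < b.

Definition has_height (h : nat) : Prop :=
  (exists s : seq T, size s = h.+1 /\ sorted <%O s) /\
  (forall s : seq T, sorted <%O s -> size s <= h.+1)%N.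

Definition section3 (h : nat) (c : 'I_h.+1 -> 'I_3 -> T) : Prop :=
  [/\ (1 <= h)%N, has_height h,
      bijective (fun p : 'I_h.+1 * 'I_3 => c p.1 p.2) &
    [/\ (forall (j : 'I_3) (k l : 'I_h.+1), (k < l)%N -> c k j < c l j),
      (forall (k : 'I_h.+1) (i j : 'I_3), i != j -> ~~ (c k i >=< c k j)),
      (forall (k l : 'I_h.+1) (i j : 'I_3),
          c k i < c l j -> c k (ordS i) < c l (ordS j)) &
      (forall k : nat, (k < h)%N -> ~ set_lt (level k) (level k.+1))]].

Definition nice_poset : Prop :=
  forall x y : T, x < y ->
    ~ (forall z, x < z -> y <= z) /\ ~ (forall z, z < y -> z <= x).

Definition horizon_cond (h eta : nat) : Prop :=
  forall k : nat, (k + eta <= h)%N -> set_lt (level k) (level (k + eta)).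

Definition is_horizon (h eta : nat) : Prop :=
  horizon_cond h eta /\ (forall e : nat, (e < eta)%N -> ~ horizon_cond h e).

Definition in_N (eta h : nat) (c : 'I_h.+1 -> 'I_3 -> T) : Prop :=
  [/\ section3 c, nice_poset, (2 <= h)%N & is_horizon h eta].

Definition has_4crown_retract : Prop :=
  exists r : T -> T,
    [/\ (forall x, r (r x) = r x), {homo r : x y / x <= y} &
        exists a b c d : T,
          [/\ [set r x | x in T] = [set a; b; c; d],
              a < c /\ a < d, b < c /\ b < d &
              ~~ (a >=< b) /\ ~~ (c >=< d)]].
End Sections.

From Pilot Require Import Defs.
From mathcomp Require Import all_boot all_order.
Set Implicit Arguments. Unset Strict Implicit. Unset Printing Implicit Defensive.
Import Order.Theory.
Local Open Scope order_scope.

(* Let r retract P onto a crown {a, b} < {p, q}.  Points whose image is on top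
   keep that image on their whole up-set, points whose image is at the bottom
   keep it on their whole down-set.  As P(0) < P(eta) and every point lies above
   P(0), a row-eta point mapped to the bottom would make its image the least
   element of the crown; so row eta goes to the top.  If c_{eta,i} < c_{l,j}
   with j <> i, the cyclic symmetry of the section yields two more such
   relations, which force r to be constant on row eta; since every point lies
   below the top row, that value would be a greatest element of the crown.
   Hence everything above c_{eta,i} lies in column i, so above c_{eta+1,i},
   against niceness. *)

Lemma ord3_const (X : Type) (f : 'I_3 -> X) (i j : 'I_3) :
  j != i -> f j = f i -> f (ordS j) = f (ordS i) -> forall k, f k = f i.
Proof.
pose g n := f (inord n).
have fE m : f m = g m by rewrite /g inord_val.
have fS m : f (ordS m) = g (m.+1 %% 3).
  by congr f; apply: ord_inj; rewrite inordK ?ltn_pmod.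
move=> + + + k; rewrite !fS !fE -val_eqE.
by case: i j k => [[|[|[|?]]] ?] [[|[|[|?]]] ?] [[|[|[|?]]] ?] //= _;
  rewrite ?modnn ?modn_small //; congruence.
Qed.

Section CrownRetraction.
Context {disp : Order.disp_t} {T : finPOrderType disp}.

Record crown_retraction (r : T -> T) (a b p q : T) : Prop := CrownRetraction {
  crown_idem : forall x, r (r x) = r x;
  crown_homo : {homo r : x y / x <= y};
  crown_image : [set r x | x in T] = [set a; b; p; q];
  crown_lt : [/\ a < p, a < q, b < p & b < q];
  crown_incomparable : ~~ (a >=< b) /\ ~~ (p >=< q) }.

Lemma has_4crown_retractP :
  has_4crown_retract (T := T) <-> exists r a b p q, crown_retraction r a b p q.
Proof.
split=> [[r [idem homo [a [b [p [q [im [ap aq] [bp bq] inc]]]]]]] |].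
  by exists r, a, b, p, q; split.
move=> [r [a [b [p [q [idem homo im [ap aq bp bq] inc]]]]]].
by exists r; split=> //; exists a, b, p, q.
Qed.

Variables (r : T -> T) (a b p q : T).
Hypothesis cr : crown_retraction r a b p q.

Lemma crown_image_mem x : r x \in [set a; b; p; q].
Proof. by rewrite -(crown_image cr) imset_f. Qed.

Lemma crown_retract_cases x : (r x \in [set a; b]) || (r x \in [set p; q]).
Proof. by have := crown_image_mem x; rewrite !inE -!orbA. Qed.

Lemma crown_fixed y : y \in [set a; b; p; q] -> r y = y.
Proof. by rewrite -(crown_image cr) => /imsetP [x _ ->]; exact: (crown_idem cr). Qed.

Lemma crown_upper_closed x y : x <= y -> r x \in [set p; q] -> r y = r x.
Proof.
have [[ap aq bp bq] [_ npq]] := (crown_lt cr, crown_incomparable cr).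
move=> /(crown_homo cr) le_rxy /set2P[] rx; move: le_rxy; rewrite rx.
all: have := crown_image_mem y; rewrite !inE -!orbA => /or4P[]/eqP-> le //; move: le.
- by rewrite (lt_geF ap).
- by rewrite (lt_geF bp).
- by move/le_comparable; rewrite (negbTE npq).
- by rewrite (lt_geF aq).
- by rewrite (lt_geF bq).
- by move/le_comparable; rewrite comparable_sym (negbTE npq).
Qed.

Lemma crown_lower_closed x y : x <= y -> r y \in [set a; b] -> r x = r y.
Proof.
have [[ap aq bp bq] [nab _]] := (crown_lt cr, crown_incomparable cr).
move=> /(crown_homo cr) le_rxy /set2P[] ry; move: le_rxy; rewrite ry.
all: have := crown_image_mem x; rewrite !inE -!orbA => /or4P[]/eqP-> le //; move: le.
- by move/le_comparable; rewrite comparable_sym (negbTE nab).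
- by rewrite (lt_geF ap).
- by rewrite (lt_geF aq).
- by move/le_comparable; rewrite (negbTE nab).
- by rewrite (lt_geF bp).
- by rewrite (lt_geF bq).
Qed.

Lemma crown_no_least x : ~ (forall z, r x <= r z).
Proof.
have [[ap aq bp bq] [nab _]] := (crown_lt cr, crown_incomparable cr).
have [ra rb] : r a = a /\ r b = b by split; apply: crown_fixed; rewrite !inE eqxx ?orbT.
have := crown_image_mem x; rewrite !inE -!orbA => /or4P[]/eqP-> least.
- by move: nab (least b); rewrite rb => /negP nab /le_comparable.
- by move: nab (least a); rewrite ra comparable_sym => /negP nab /le_comparable.
- by have := least a; rewrite ra (lt_geF ap).
- by have := least a; rewrite ra (lt_geF aq).
Qed.

Lemma crown_no_greatest x : ~ (forall z, r z <= r x).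
Proof.
have [[ap aq bp bq] [_ npq]] := (crown_lt cr, crown_incomparable cr).
have [rp rq] : r p = p /\ r q = q by split; apply: crown_fixed; rewrite !inE eqxx ?orbT.
have := crown_image_mem x; rewrite !inE -!orbA => /or4P[]/eqP-> greatest.
- by have := greatest p; rewrite rp (lt_geF ap).
- by have := greatest p; rewrite rp (lt_geF bp).
- by move: npq (greatest q); rewrite rq comparable_sym => /negP npq /le_comparable.
- by move: npq (greatest p); rewrite rp => /negP npq /le_comparable.
Qed.

End CrownRetraction.

Section Grid.
Context {disp : Order.disp_t} {T : finPOrderType disp}.
Variables (h : nat) (c : 'I_h.+1 -> 'I_3 -> T) (g : T -> 'I_h.+1 * 'I_3).
Hypothesis cK : forall k i, g (c k i) = (k, i).
Hypothesis gK : forall x, c (g x).1 (g x).2 = x.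
Hypothesis col_chain : forall j (k l : 'I_h.+1), (k < l)%N -> c k j < c l j.
Hypothesis row_antichain : forall k (i j : 'I_3), i != j -> ~~ (c k i >=< c k j).

Lemma col_le j (k l : 'I_h.+1) : (k <= l)%N -> c k j <= c l j.
Proof. by rewrite leq_eqVlt => /orP[/eqP/val_inj-> // | /(col_chain j)/ltW]. Qed.

Lemma row_lt k l i j : c k i < c l j -> (k < l)%N.
Proof.
rewrite ltnNge; apply: contraTN => le_lk.
have le_lkj : c l j <= c k j := col_le j le_lk.
case: (eqVneq i j) => [-> | ne_ij]; first by rewrite (le_gtF le_lkj).
apply/negP => /lt_le_trans/(_ le_lkj)/lt_comparable.
by rewrite (negbTE (row_antichain k ne_ij)).
Qed.

Lemma minset_rows_ge k :
  Defs.minset [set x | (k <= (g x).1)%N] = [set x | (g x).1 == k :> nat].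
Proof.
apply/setP => x; rewrite -[x]gK; case: (g x) => l i.
rewrite !inE cK /=; case: ltngtP => [lt_kl | // | ->] /=.
- apply/negbTE/forallPn.
  exists (c (Ordinal (ltn_trans lt_kl (ltn_ord l))) i).
  by rewrite negb_imply inE cK leqnn negbK /=; apply: col_chain.
- apply/forallP => y; rewrite -[y]gK inE cK /=.
  by apply/implyP => le_ly; apply/negP => /row_lt; rewrite ltnNge le_ly.
Qed.

Lemma below_rows k : below k = [set x | ((g x).1 < k)%N].
Proof.
elim: k => [|k IHk] /=; first by apply/setP => x; rewrite !inE.
have -> : ~: below k = [set x | (k <= (g x).1)%N].
  by apply/setP => x; rewrite IHk !inE -leqNgt.
apply/setP => x; rewrite minset_rows_ge IHk !inE.
by rewrite orbC -leq_eqVlt ltnS.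
Qed.

Lemma level_rows k : level k = [set x | (g x).1 == k :> nat].
Proof.
rewrite /level -minset_rows_ge below_rows; congr Defs.minset.
by apply/setP => x; rewrite !inE -leqNgt.
Qed.

Section Retraction.
Variables (r : T -> T) (a b p q : T).
Hypothesis cr : crown_retraction r a b p q.
Hypothesis row_rot :
  forall k l i j, c k i < c l j -> c k (ordS i) < c l (ordS j).
Variable e : 'I_h.+1.
Hypothesis row0_lt_row : forall i j, c ord0 i < c e j.

Lemma retract_row_upper j : r (c e j) \in [set p; q].
Proof.
case/orP: (crown_retract_cases cr (c e j)) => // lower; exfalso.
apply: (crown_no_least cr (x := c e j)) => z; rewrite -[z]gK.
have <- : r (c ord0 (g z).2) = r (c e j).
  exact: (crown_lower_closed cr (ltW (row0_lt_row _ _))).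
exact/(crown_homo cr)/col_le.
Qed.

Lemma above_row_same_col l i j : c e i < c l j -> j = i.
Proof.
move=> lt_eil; apply/eqP/negPn/negP => ne_ji.
have shift k k' : c e k < c l k' -> r (c e k') = r (c e k).
  move=> lt_ekl; have le_el : (e <= l)%N by apply/ltnW/(row_lt lt_ekl).
  rewrite -(crown_upper_closed cr (col_le k' le_el) (retract_row_upper k')).
  exact: (crown_upper_closed cr (ltW lt_ekl) (retract_row_upper k)).
have row_const : forall k, r (c e k) = r (c e i).
  apply: (ord3_const (f := fun k => r (c e k)) ne_ji (shift _ _ lt_eil)).
  exact: shift _ _ (row_rot lt_eil).
apply: (crown_no_greatest cr (x := c e i)) => z.
rewrite -[z]gK -(row_const (g z).2).
have le_top : c (g z).1 (g z).2 <= c ord_max (g z).2 by apply/col_le/leq_ord.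
apply: (le_trans (crown_homo cr le_top)).
have le_e_top : c e (g z).2 <= c ord_max (g z).2 by apply/col_le/leq_ord.
by rewrite (crown_upper_closed cr le_e_top (retract_row_upper _)).
Qed.

Lemma above_row_le_next_row (l : 'I_h.+1) i z :
  (l <= e.+1)%N -> c e i < z -> c l i <= z.
Proof.
move=> le_le1; rewrite -[z]gK => lt_ez.
have col_z := above_row_same_col lt_ez; rewrite col_z in lt_ez *.
exact/col_le/(leq_trans le_le1)/(row_lt lt_ez).
Qed.

End Retraction.

End Grid.

Theorem lemma3p7 (disp : Order.disp_t) (T : finPOrderType disp)
  (eta h : nat) (c : 'I_h.+1 -> 'I_3 -> T) :
  (2 <= eta)%N -> in_N eta c -> (eta < h)%N -> ~ has_4crown_retract (T := T).
Proof.
move=> _ [[_ _ [g cK gK] [col_chain row_antichain row_rot _]] nice _ [hor _]].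
move=> lt_eta_h.
have {}cK k i : g (c k i) = (k, i) := cK (k, i).
have {}gK x : c (g x).1 (g x).2 = x := gK x.
case/has_4crown_retractP => [r [a [b [p [q cr]]]]].
pose e : 'I_h.+1 := Ordinal (leqW lt_eta_h).
pose e1 : 'I_h.+1 := Ordinal (lt_eta_h : (eta.+1 < h.+1)%N).
have row0_lt_row i j : c ord0 i < c e j.
  apply: (hor 0 (ltnW lt_eta_h));
  by rewrite (level_rows cK gK col_chain row_antichain) inE cK.
have [not_upset_included _] := nice _ _ (col_chain ord0 e e1 (ltnSn eta)).
apply: not_upset_included => z.
apply: (above_row_le_next_row gK col_chain row_antichain cr row_rot row0_lt_row).
by rewrite leqnn.
Qed.
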